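(* Let $(V,\varrho,K)$ be a representation of a difference Lie algebra $(\mathfrak g,D)$. Set $\mathfrak C^1=\mathrm{Hom}(\mathfrak g,V)$ and $\mathfrak C^n=\mathrm{Hom}(\wedge^n\mathfrak g,V)\oplus\mathrm{Hom}(\wedge^{n-1}\mathfrak g,V)$ for $n\ge2$, and define $\delta_\varrho:\mathfrak C^n\to\mathfrak C^{n+1}$ by $\delta_\varrho(f,\theta)=(d^{CE}_\varrho f,\ \partial\theta+T(f))$ (for $n=1$, $\delta_\varrho f=(d^{CE}_\varrho f,T(f))$). Then $\delta_\varrho\circ\delta_\varrho=0$.
   Context: A difference Lie algebra $(\mathfrak g,D)$: a Lie algebra with linear $D$ such that $D[x,y]=[x,D(y)]-[y,D(x)]+[D(x),D(y)]$. A representation $(V,\varrho,K)$: a Lie algebra representation $\varrho:\mathfrak g\to\mathfrak{gl}(V)$ and linear $K:V\to V$ with $K(\varrho(x)u)=\varrho(D(x))u+\varrho(x)K(u)+\varrho(D(x))K(u)$. $d^{CE}_\varrho$ is the Chevalley–Eilenberg differential of $\mathfrak g$ with coefficients in $(V,\varrho)$. For $\theta\in\mathrm{Hom}(\wedge^{n-1}\mathfrak g,V)$: $\partial\theta(x_1,\dots,x_n)=\sum_{i=1}^n(-1)^{i+1}\varrho(x_i)\theta(x_1,\dots,\hat x_i,\dots,x_n)+\sum_{i=1}^n(-1)^{i+1}\varrho(D(x_i))\theta(x_1,\dots,\hat x_i,\dots,x_n)+\sum_{i<j}(-1)^{i+j}\theta([x_i,x_j],x_1,\dots,\hat x_i,\dots,\hat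 x_j,\dots,x_n)$. For $f\in\mathrm{Hom}(\wedge^n\mathfrak g,V)$: $T(f)(x_1,\dots,x_n)=(-1)^n\big(\sum_{k=1}^n\sum_{1\le i_1<\cdots<i_k\le n}f(y_1,\dots,y_n)-K(f(x_1,\dots,x_n))\big)$, where $y_j=D(x_j)$ if $j\in\{i_1,\dots,i_k\}$ and $y_j=x_j$ otherwise. *)

From HB Require Import structures.
From mathcomp Require Import all_boot all_order all_algebra.
Set Implicit Arguments. Unset Strict Implicit. Unset Printing Implicit Defensive.
Import GRing.Theory.
Local Open Scope ring_scope.

Section DiffLie.
Variables (R : fieldType) (g V : lmodType R).

Definition is_lie_bracket (br : g -> g -> g) : Prop :=
  [/\ (forall (a : R) x y z, br (a *: x + y) z = a *: br x z + br y z),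
      (forall (a : R) x y z, br z (a *: x + y) = a *: br z x + br z y),
      (forall x, br x x = 0) &
      (forall x y z, br x (br y z) + br y (br z x) + br z (br x y) = 0)].

Definition is_difference_op (br : g -> g -> g) (D : g -> g) : Prop :=
  (forall (a : R) x y, D (a *: x + y) = a *: D x + D y) /\
  (forall x y, D (br x y) = br x (D y) - br y (D x) + br (D x) (D y)).

Definition is_lie_rep (br : g -> g -> g) (rho : g -> V -> V) : Prop :=
  [/\ (forall (a : R) x y v, rho (a *: x + y) v = a *: rho x v + rho y v),
      (forall (a : R) x u v, rho x (a *: u + v) = a *: rho x u + rho x v) &
      (forall x y v, rho (br x y) v = rho x (rho y v) - rho y (rho x v))].

Definition is_diff_rep (D : g -> g) (rho : g -> V -> V) (K : V -> V) : Prop :=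
  (forall (a : R) u v, K (a *: u + v) = a *: K u + K v) /\
  (forall x u, K (rho x u) = rho (D x) u + rho x (K u) + rho (D x) (K u)).

Definition cochain (n : nat) := {ffun 'I_n -> g} -> V.

Definition upd n (x : {ffun 'I_n -> g}) (i : 'I_n) (u : g) : {ffun 'I_n -> g} :=
  [ffun k => if k == i then u else x k].

Definition hom_wedge n (f : cochain n) : Prop :=
  (forall (x : {ffun 'I_n -> g}) (i : 'I_n) (a : R) (u v : g),
      f (upd x i (a *: u + v)) = a *: f (upd x i u) + f (upd x i v)) /\
  (forall (x : {ffun 'I_n -> g}) (i j : 'I_n), i != j -> x i = x j -> f x = 0).

Definition skip n (i : 'I_n.+1) (x : {ffun 'I_n.+1 -> g}) : {ffun 'I_n -> g} :=
  [ffun k => x (lift i k)].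

Definition cons0 n (a : g) (y : {ffun 'I_n -> g}) : {ffun 'I_n.+1 -> g} :=
  [ffun k => if unlift ord0 k is Some k' then y k' else a].

(* generic Chevalley--Eilenberg-type formula with action act (0-indexed, so the
   signs (-1)^(i+1), (-1)^(i+j) of the 1-indexed formula become (-1)^i, (-1)^(i+j)) *)
Definition ce_formula (br : g -> g -> g) (act : g -> V -> V) m (f : cochain m.+1)
  : cochain m.+2 := fun x =>
  \sum_(i < m.+2) (-1) ^+ i *: act (x i) (f (skip i x)) +
  \sum_(i < m.+2) \sum_(j < m.+2 | (i < j)%N)
     (-1) ^+ (i + j) *: f (cons0 (br (x i) (x j)) (skip (inord i) (skip j x))).

Definition dCE br (rho : g -> V -> V) m (f : cochain m.+1) : cochain m.+2 :=
  ce_formula br rho f.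

Definition dpartial br (rho : g -> V -> V) (D : g -> g) m (th : cochain m.+1)
  : cochain m.+2 :=
  ce_formula br (fun x v => rho x v + rho (D x) v) th.

Definition Top (D : g -> g) (K : V -> V) n (f : cochain n) : cochain n := fun x =>
  (-1) ^+ n *: (\sum_(S : {set 'I_n} | S != set0)
                   f [ffun j => if j \in S then D (x j) else x j]
                - K (f x)).

Definition addc n (a b : cochain n) : cochain n := fun x => a x + b x.

Definition delta1 br rho D K (f : cochain 1) : cochain 2 * cochain 1 :=
  (dCE br rho f, Top D K f).

Definition delta br rho D K m (p : cochain m.+2 * cochain m.+1)
  : cochain m.+3 * cochain m.+2 :=
  (dCE br rho p.1, addc (dpartial br rho D p.2) (Top D K p.1)).

End DiffLie.

From HB Require Import structures.
From mathcomp Require Import all_boot all_order all_algebra ssrAC.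
Import GRing.Theory.
Local Open Scope ring_scope.

Set Implicit Arguments. Unset Strict Implicit. Unset Printing Implicit Defensive.

(* Write phi = id + D and Psi = id + K.  The difference condition on D says
   exactly that phi is a Lie algebra endomorphism of g, and the condition on K
   says Psi (rho x u) = rho (phi x) (Psi u).  Hence rho' := rho \o phi, the
   action occurring in the operator \partial, is again a representation and
   \partial = d^CE_rho'.  Expanding the sum over subsets by multi-additivity
   gives T f = (-1)^n (f \o phi - Psi \o f), and both f |-> f \o phi and
   f |-> Psi \o f intertwine d^CE_rho with d^CE_rho', so that
   \partial T + T d^CE_rho = 0.  Since d^CE \o d^CE = 0 for every
   representation (by induction on the degree, from Cartan's formulas
   i_a d + d i_a = L_a, [L_a, d] = 0 and [L_a, L_b] = L_[a,b]), we get
   delta (delta (f, theta)) = (d d f, \partial \partial theta + \partial T f + T d f) = 0. *)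

Section CochainArguments.
Variables (R : fieldType) (g : lmodType R).

Lemma cons0_ord0 n (a : g) (y : {ffun 'I_n -> g}) : cons0 a y ord0 = a.
Proof. by rewrite ffunE unlift_none. Qed.

Lemma cons0_lift n (a : g) (y : {ffun 'I_n -> g}) k : cons0 a y (lift ord0 k) = y k.
Proof. by rewrite ffunE liftK. Qed.

Lemma skip_ord0_cons0 n (a : g) (y : {ffun 'I_n -> g}) : skip ord0 (cons0 a y) = y.
Proof. by apply/ffunP => k; rewrite ffunE cons0_lift. Qed.

Lemma skip_lift0_cons0 n (a : g) (y : {ffun 'I_n.+1 -> g}) j :
  skip (lift ord0 j) (cons0 a y) = cons0 a (skip j y).
Proof.
apply/ffunP => k; rewrite ffunE; case: (unliftP ord0 k) => [k'|] ->.
  have -> : lift (lift ord0 j) (lift ord0 k') = lift ord0 (lift j k').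
    by apply: val_inj; rewrite /= /bump /= !add1n ltnS addnS.
  by rewrite !cons0_lift ffunE.
have -> : lift (lift ord0 j) ord0 = ord0 :> 'I_n.+2 by apply: val_inj.
by rewrite !cons0_ord0.
Qed.

Lemma cons0_head_skip n (x : {ffun 'I_n.+1 -> g}) : x = cons0 (x ord0) (skip ord0 x).
Proof.
apply/ffunP => k; case: (unliftP ord0 k) => [k'|] ->.
  by rewrite cons0_lift ffunE.
by rewrite cons0_ord0.
Qed.

Lemma upd_cons0_ord0 n (a u : g) (y : {ffun 'I_n -> g}) :
  upd (cons0 a y) ord0 u = cons0 u y.
Proof.
apply/ffunP => k; rewrite ffunE; case: (unliftP ord0 k) => [k'|] ->.
  by rewrite !cons0_lift.
by rewrite eqxx cons0_ord0.
Qed.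

Lemma upd_cons0_lift0 n (a u : g) (y : {ffun 'I_n -> g}) i :
  upd (cons0 a y) (lift ord0 i) u = cons0 a (upd y i u).
Proof.
apply/ffunP => k; rewrite ffunE; case: (unliftP ord0 k) => [k'|] ->.
  by rewrite !cons0_lift ffunE (inj_eq (@lift_inj _ ord0)).
by rewrite !cons0_ord0.
Qed.

End CochainArguments.

Lemma inord0 n : (inord 0 : 'I_n.+1) = ord0.
Proof. by apply: val_inj; rewrite /= inordK. Qed.

Lemma inord_succ n i : (i < n.+1)%N -> (inord i.+1 : 'I_n.+2) = lift ord0 (inord i).
Proof. by move=> lt_in; apply: val_inj; rewrite /= /bump /= !inordK // ltnS. Qed.

Section LinearFunction.
Variables (R : fieldType) (U W : lmodType R) (f : U -> W).
Hypothesis linf : forall (c : R) u v, f (c *: u + v) = c *: f u + f v.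

Lemma linf0 : f 0 = 0.
Proof.
have := linf 1 0 0; rewrite !scale1r addr0 => f0_double.
by apply: (@addrI _ (f 0)); rewrite addr0 -f0_double.
Qed.

Lemma linfD u v : f (u + v) = f u + f v.
Proof. by rewrite -[u]scale1r linf !scale1r. Qed.

Lemma linfZ c u : f (c *: u) = c *: f u.
Proof. by rewrite -[c *: u]addr0 linf linf0 addr0. Qed.

Lemma linfN u : f (- u) = - f u.
Proof. by rewrite -scaleN1r linfZ scaleN1r. Qed.

Lemma linfB u v : f (u - v) = f u - f v.
Proof. by rewrite linfD linfN. Qed.

Lemma linf_sum I (r : seq I) (P : pred I) (F : I -> U) :
  f (\sum_(i <- r | P i) F i) = \sum_(i <- r | P i) f (F i).
Proof. exact: (big_morph f linfD linf0). Qed.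

End LinearFunction.

(* Cochains are plain functions, so linearity of an operator on cochains is
   stated pointwise; this avoids functional extensionality. *)
Definition pointwise_linear (R : fieldType) (g V : lmodType R) n m
    (op : cochain g V n -> cochain g V m) :=
  forall (c : R) (h h1 h2 : cochain g V n),
    (forall y, h y = c *: h1 y + h2 y) -> forall x, op h x = c *: op h1 x + op h2 x.

Section PointwiseLinear.
Variables (R : fieldType) (g V : lmodType R) (n m : nat).
Variable op : cochain g V n -> cochain g V m.
Hypothesis op_lin : pointwise_linear op.

Lemma op0 x : op (fun _ => 0) x = 0.
Proof.
have op0_double : op (fun _ => 0) x = op (fun _ => 0) x + op (fun _ => 0) x.
  by rewrite -{2}[op _ x]scale1r; apply: op_lin => y; rewrite scale1r addr0.
by apply: (@addrI _ (op (fun _ => 0) x)); rewrite addr0 -op0_double.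
Qed.

Lemma op_scale (c : R) h h1 : (forall y, h y = c *: h1 y) -> forall x, op h x = c *: op h1 x.
Proof.
move=> eh x; rewrite (op_lin (c := c) (h1 := h1) (h2 := fun _ => 0)) ?op0 ?addr0 //.
by move=> y; rewrite eh addr0.
Qed.

Lemma op_ext h h1 : (forall y, h y = h1 y) -> forall x, op h x = op h1 x.
Proof. by move=> eh x; rewrite (op_scale (c := 1) (h1 := h1)) ?scale1r // => y; rewrite eh scale1r. Qed.

Lemma op_opp h h1 : (forall y, h y = - h1 y) -> forall x, op h x = - op h1 x.
Proof. by move=> eh x; rewrite (op_scale (c := -1) (h1 := h1)) ?scaleN1r // => y; rewrite eh scaleN1r. Qed.

Lemma op_add h h1 h2 : (forall y, h y = h1 y + h2 y) -> forall x, op h x = op h1 x + op h2 x.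
Proof.
move=> eh x; rewrite (op_lin (c := 1) (h1 := h1) (h2 := h2)) ?scale1r // => y.
by rewrite scale1r.
Qed.

Lemma op_sub h h1 h2 : (forall y, h y = h1 y - h2 y) -> forall x, op h x = op h1 x - op h2 x.
Proof.
move=> eh x; rewrite (op_lin (c := -1) (h1 := h2) (h2 := h1)) ?scaleN1r 1?addrC // => y.
by rewrite eh scaleN1r addrC.
Qed.

End PointwiseLinear.

Section LieBracket.
Variables (R : fieldType) (g : lmodType R) (br : g -> g -> g).
Hypothesis Hbr : is_lie_bracket br.

Lemma br_linl (c : R) x y z : br (c *: x + y) z = c *: br x z + br y z.
Proof. by case: Hbr => h _ _ _; apply: h. Qed.

Lemma br_linr (c : R) x y z : br z (c *: x + y) = c *: br z x + br z y.
Proof. by case: Hbr => _ h _ _; apply: h. Qed.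

Lemma brxx x : br x x = 0.
Proof. by case: Hbr => _ _ h _; apply: h. Qed.

Lemma brDl x y z : br (x + y) z = br x z + br y z.
Proof. exact: (linfD (f := br^~ z) (fun c u v => br_linl c u v z)). Qed.

Lemma brDr x y z : br z (x + y) = br z x + br z y.
Proof. exact: (linfD (f := br z) (fun c u v => br_linr c u v z)). Qed.

Lemma brNr x y : br x (- y) = - br x y.
Proof. exact: (linfN (f := br x) (fun c u v => br_linr c u v x)). Qed.

Lemma br_anti x y : br x y = - br y x.
Proof.
have := brxx (x + y); rewrite brDl !brDr !brxx add0r addr0 => /eqP.
by rewrite addr_eq0 => /eqP.
Qed.

Lemma br_jacobi_sub a b c : br b (br a c) - br a (br b c) = - br (br a b) c.
Proof.
have : br a (br b c) + br b (br c a) + br c (br a b) = 0 by case: Hbr.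
rewrite [br c a]br_anti brNr [br c (br a b)]br_anti => /eqP.
by rewrite addr_eq0 => /eqP jac; rewrite -opprB jac opprK.
Qed.

End LieBracket.

Section Alternating.
Variables (R : fieldType) (g V : lmodType R).

Definition contract n (a : g) (f : cochain g V n.+1) : cochain g V n :=
  fun y => f (cons0 a y).

Definition linear_head n (f : cochain g V n.+1) := forall (c : R) u v y,
  f (cons0 (c *: u + v) y) = c *: f (cons0 u y) + f (cons0 v y).

Definition antisym_head n : cochain g V n.+1 -> Prop :=
  match n return cochain g V n.+1 -> Prop with
  | 0 => fun _ => True
  | k.+1 => fun f => forall a b z, f (cons0 a (cons0 b z)) = - f (cons0 b (cons0 a z))
  end.

(* Linearity and antisymmetry in the first two arguments, inherited by every
   contraction: all that the induction on the degree needs from hom_wedge. *)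
Fixpoint alternating n : cochain g V n -> Prop :=
  match n return cochain g V n -> Prop with
  | 0 => fun _ => True
  | k.+1 => fun f =>
      [/\ linear_head f, forall a, alternating (contract a f) & antisym_head f]
  end.

Lemma alternating_antisym_head n (f : cochain g V n.+1) : alternating f -> antisym_head f.
Proof. by case. Qed.

Section LinearHead.
Variables (n : nat) (f : cochain g V n.+1).
Hypothesis f_lin : linear_head f.

Lemma linear_headD u v y : f (cons0 (u + v) y) = f (cons0 u y) + f (cons0 v y).
Proof. by apply: (linfD (f := fun u => f (cons0 u y))) => c u' v'; apply: f_lin. Qed.

Lemma linear_headN u y : f (cons0 (- u) y) = - f (cons0 u y).
Proof. by apply: (linfN (f := fun u => f (cons0 u y))) => c u' v'; apply: f_lin. Qed.

Lemma linear_headB u v y : f (cons0 (u - v) y) = f (cons0 u y) - f (cons0 v y).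
Proof. by apply: (linfB (f := fun u => f (cons0 u y))) => c u' v'; apply: f_lin. Qed.

End LinearHead.

Lemma alternating_lincomb n (c : R) (h h1 h2 : cochain g V n) :
  alternating h1 -> alternating h2 -> (forall y, h y = c *: h1 y + h2 y) ->
  alternating h.
Proof.
elim: n h h1 h2 => [//|n IH] h h1 h2 [lin1 con1 anti1] [lin2 con2 anti2] eh; split.
- by move=> c' u v y; rewrite !eh lin1 lin2 !scalerDr !scalerA mulrC addrACA.
- by move=> a; apply: (IH _ _ _ (con1 a) (con2 a)) => y; rewrite /contract eh.
- case: n h h1 h2 {IH con1 con2} lin1 lin2 anti1 anti2 eh => [//|k] h h1 h2 _ _ anti1 anti2 eh.
  by move=> a b z; rewrite !eh anti1 anti2 scalerN opprD.
Qed.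

Lemma alternating_sub n (h h1 h2 : cochain g V n) :
  alternating h1 -> alternating h2 -> (forall y, h y = h1 y - h2 y) -> alternating h.
Proof.
move=> alt1 alt2 eh; apply: (alternating_lincomb (c := -1) alt2 alt1) => y.
by rewrite scaleN1r eh addrC.
Qed.

Lemma hom_wedge_linear_head n (f : cochain g V n.+1) : hom_wedge f -> linear_head f.
Proof.
case=> f_lin _ c u v y.
have cons0E w : cons0 w y = upd (cons0 0 y) ord0 w by rewrite upd_cons0_ord0.
by rewrite (cons0E (c *: u + v)) (cons0E u) (cons0E v); apply: f_lin.
Qed.

Lemma hom_wedge_contract n (f : cochain g V n.+1) a : hom_wedge f -> hom_wedge (contract a f).
Proof.
case=> f_lin f_alt; split.
  by move=> y i c u v; rewrite /contract -!upd_cons0_lift0; apply: f_lin.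
move=> y i j neq_ij eq_yij; apply: (f_alt _ (lift ord0 i) (lift ord0 j)).
  by rewrite (inj_eq (@lift_inj _ ord0)).
by rewrite !cons0_lift.
Qed.

Lemma hom_wedge_alternating n (f : cochain g V n) : hom_wedge f -> alternating f.
Proof.
elim: n f => [//|n IH] f hf; split.
- exact: hom_wedge_linear_head.
- by move=> a; apply/IH/hom_wedge_contract.
case: n f {IH} hf => [//|k] f hf a b z /=.
have f_lin := hom_wedge_linear_head hf.
have fa_lin u := hom_wedge_linear_head (hom_wedge_contract u hf).
have f_diag u : f (cons0 u (cons0 u z)) = 0.
  case: hf => _ f_alt; apply: (f_alt _ ord0 (lift ord0 ord0)) => //.
  by rewrite cons0_ord0 cons0_lift cons0_ord0.
have := f_diag (a + b); rewrite linear_headD //.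
have fa_add u v w : f (cons0 u (cons0 (v + w) z)) =
                    f (cons0 u (cons0 v z)) + f (cons0 u (cons0 w z)).
  exact: (linear_headD (fa_lin u)).
by rewrite !fa_add !f_diag add0r addr0 => /eqP; rewrite addr_eq0 => /eqP.
Qed.

Lemma alternating_updD n (f : cochain g V n) x i u v : alternating f ->
  f (upd x i (u + v)) = f (upd x i u) + f (upd x i v).
Proof.
elim: n f x i => [|n IH] f x i altf; first by case: i.
have [f_lin f_con _] := altf.
rewrite (cons0_head_skip x); case: (unliftP ord0 i) => [i'|] ->.
  by rewrite !upd_cons0_lift0; exact: (IH _ _ _ (f_con (x ord0))).
by rewrite !upd_cons0_ord0 linear_headD.
Qed.

End Alternating.

Section Cartan.
Variables (R : fieldType) (g V : lmodType R) (br : g -> g -> g) (act : g -> V -> V).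
Hypothesis Hbr : is_lie_bracket br.
Hypothesis Hact : is_lie_rep br act.

(* For alternating f, the j-th term is f at y with y_j replaced by [a, y_j],
   that argument being moved to the front. *)
Definition bracket_args n (a : g) : cochain g V n -> cochain g V n :=
  match n return cochain g V n -> cochain g V n with
  | 0 => fun _ _ => 0
  | m.+1 => fun f y => \sum_(j < m.+1) (-1) ^+ j *: f (cons0 (br a (y j)) (skip j y))
  end.

Definition lie_deriv n a (f : cochain g V n) : cochain g V n :=
  fun y => act a (f y) - bracket_args a f y.

(* dCE extended to degree 0, where the induction on the degree starts. *)
Definition ce_diff n : cochain g V n -> cochain g V n.+1 :=
  match n return cochain g V n -> cochain g V n.+1 with
  | 0 => fun f x => act (x ord0) (f (skip ord0 x))
  | m.+1 => fun f => ce_formula br act f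
  end.

Lemma act_linl (c : R) x y v : act (c *: x + y) v = c *: act x v + act y v.
Proof. by case: Hact => h _ _; apply: h. Qed.

Lemma act_linr x (c : R) u v : act x (c *: u + v) = c *: act x u + act x v.
Proof. by case: Hact => _ h _; apply: h. Qed.

Lemma act_br x y v : act (br x y) v = act x (act y v) - act y (act x v).
Proof. by case: Hact => _ _ h; apply: h. Qed.

Lemma ce_formula_cons0 m (f : cochain g V m.+1) a y :
  ce_formula br act f (cons0 a y) =
    act a (f y) - \sum_(k < m.+1) (-1) ^+ k *: act (y k) (f (cons0 a (skip k y)))
    - \sum_(j < m.+1) (-1) ^+ j *: f (cons0 (br a (y j)) (skip j y))
    + \sum_(i < m.+1) \sum_(j < m.+1 | (i < j)%N) (-1) ^+ (i + j) *:
        f (cons0 (br (y i) (y j)) (skip (inord i.+1) (cons0 a (skip j y)))).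
Proof.
rewrite /ce_formula big_ord_recl cons0_ord0 skip_ord0_cons0 expr0 scale1r -!addrA.
congr (_ + _); congr (_ + _).
  rewrite -sumrN; apply: eq_bigr => k _.
  by rewrite cons0_lift skip_lift0_cons0 lift0 exprS mulN1r scaleNr.
rewrite big_ord_recl; congr (_ + _).
  rewrite big_mkcond big_ord_recl /= add0r -sumrN; apply: eq_bigr => j _.
  rewrite inord0 cons0_ord0 cons0_lift skip_lift0_cons0 skip_ord0_cons0.
  by rewrite add0n exprS mulN1r scaleNr.
apply: eq_bigr => i _.
rewrite big_mkcond big_ord_recl /= add0r [in RHS]big_mkcond; apply: eq_bigr => j _.
rewrite ltnS; case: ifP => // _.
by rewrite !cons0_lift skip_lift0_cons0 addSn addnS !exprS mulN1r mulNr mul1r opprK.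
Qed.

Lemma contract_ce_diff n (f : cochain g V n.+1) a y : antisym_head f ->
  contract a (ce_diff f) y = lie_deriv a f y - ce_diff (contract a f) y.
Proof.
rewrite /contract /lie_deriv /= ce_formula_cons0.
case: n f y => [|k] f y /= anti_f.
  rewrite big_ord1 [X in _ + X = _]big1 ?addr0; last first.
    by move=> i _; rewrite big_pred0 // => j; rewrite (ord1 i) (ord1 j).
  by rewrite expr0 scale1r big_ord1 expr0 scale1r addrAC.
rewrite /ce_formula.
set A := \sum_(i < k.+2) _; set B := \sum_(i < k.+2) _.
set C := \sum_(i < k.+2) _; set C' := \sum_(i < k.+2) _.
have -> : C' = - A.
  rewrite /A /C' -sumrN; apply: eq_bigr => i _; rewrite -sumrN; apply: eq_bigr => j lt_ij.
  have lt_i : (i < k.+1)%N by rewrite -ltnS (leq_trans _ (ltn_ord j)) // ltnS.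
  by rewrite inord_succ // skip_lift0_cons0 anti_f scalerN.
by rewrite opprD !addrA [_ - B - C]addrAC.
Qed.

Lemma contract_lie_deriv n (f : cochain g V n.+1) a b y : antisym_head f ->
  contract b (lie_deriv a f) y = lie_deriv a (contract b f) y - contract (br a b) f y.
Proof.
move=> anti_f; rewrite /contract /lie_deriv /= big_ord_recl cons0_ord0 skip_ord0_cons0.
rewrite expr0 scale1r opprD addrA addrAC; congr (_ - _); congr (_ - _).
case: n f anti_f y => [|k] f anti_f y /=; first by rewrite big_ord0.
apply: eq_bigr => j _; rewrite cons0_lift skip_lift0_cons0 anti_f exprS mulN1r.
by rewrite scaleNr scalerN opprK.
Qed.

Section Linearity.
Variable n : nat.

Lemma bracket_args_plinear a : pointwise_linear (@bracket_args n a).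
Proof.
case: n => [|k] c h h1 h2 eh x /=; first by rewrite scaler0 addr0.
rewrite scaler_sumr -big_split; apply: eq_bigr => j _.
by rewrite eh scalerDr !scalerA mulrC.
Qed.

Lemma lie_deriv_plinear a : pointwise_linear (@lie_deriv n a).
Proof.
move=> c h h1 h2 eh x; rewrite /lie_deriv (bracket_args_plinear a eh) eh act_linr.
by rewrite scalerBr opprD !addrA; congr (_ - _); rewrite addrAC.
Qed.

Lemma ce_diff_plinear : pointwise_linear (@ce_diff n).
Proof.
case: n => [|k] c h h1 h2 eh x /=; first by rewrite eh act_linr.
rewrite /ce_formula scalerDr !scaler_sumr addrACA -!big_split /=.
apply: eq_bigr => i _; congr (_ + _).
  by rewrite eh act_linr scalerDr !scalerA mulrC.
rewrite scaler_sumr -big_split; apply: eq_bigr => j _.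
by rewrite eh scalerDr !scalerA mulrC.
Qed.

Lemma bracket_args_linl (f : cochain g V n) (c : R) u v y : alternating f ->
  bracket_args (c *: u + v) f y = c *: bracket_args u f y + bracket_args v f y.
Proof.
case: n f y => [|k] f y /=; first by rewrite scaler0 addr0.
case=> f_lin _ _; rewrite scaler_sumr -big_split; apply: eq_bigr => j _.
by rewrite (br_linl Hbr) f_lin scalerDr !scalerA mulrC.
Qed.

Lemma lie_deriv_linl (f : cochain g V n) (c : R) u v y : alternating f ->
  lie_deriv (c *: u + v) f y = c *: lie_deriv u f y + lie_deriv v f y.
Proof.
by move=> altf; rewrite /lie_deriv bracket_args_linl // act_linl scalerBr opprD addrACA.
Qed.

End Linearity.

Lemma lie_deriv_alternating n (f : cochain g V n) a : alternating f -> alternating (lie_deriv a f).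
Proof.
elim: n f a => [//|n IH] f a [f_lin f_con f_anti]; split.
- move=> c u v y; have Lcons0 w := contract_lie_deriv a w y f_anti.
  rewrite /contract in Lcons0; rewrite !Lcons0.
  rewrite (@lie_deriv_plinear _ a c _ (contract u f) (contract v f)).
    by rewrite (br_linr Hbr) f_lin opprD addrACA -scalerBr.
  by move=> y'; rewrite /contract f_lin.
- move=> b; apply: (alternating_sub (h1 := lie_deriv a (contract b f)) (h2 := contract (br a b) f)).
  + exact/IH/f_con.
  + exact: f_con.
  + by move=> y; rewrite contract_lie_deriv.
- case: n f {IH} f_lin f_con f_anti => [//|k] f _ f_con f_anti b c z /=.
  have Lcontract b' c' := contract_lie_deriv a c' z (alternating_antisym_head (f_con b')).
  rewrite /contract /= in Lcontract.
  have Lcons0 b' c' := contract_lie_deriv a b' (cons0 c' z) f_anti.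
  rewrite /contract /= in Lcons0; rewrite !Lcons0 !Lcontract.
  rewrite (op_opp (lie_deriv_plinear a) (h1 := fun z => f (cons0 c (cons0 b z)))); last first.
    by move=> y; rewrite f_anti.
  rewrite [f (cons0 b (cons0 _ z))]f_anti [f (cons0 (br a b) (cons0 c z))]f_anti.
  by rewrite !opprD !opprK addrAC.
Qed.

Lemma ce_diff_antisym_head n (f : cochain g V n.+1) : alternating f ->
  antisym_head (ce_diff f).
Proof.
move=> altf a b z; have [f_lin f_con f_anti] := altf.
have dcons0 a' b' := @contract_ce_diff n f a' (cons0 b' z) f_anti.
have Lcons0 a' b' := @contract_lie_deriv n f a' b' z f_anti.
rewrite /contract in dcons0 Lcons0; rewrite !dcons0 !Lcons0 (br_anti Hbr b a) linear_headN //.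
clear dcons0 Lcons0 altf f_lin; case: n f z f_con f_anti => [|k] f z f_con f_anti.
  rewrite /lie_deriv /= !cons0_ord0 !skip_ord0_cons0 !subr0 /contract.
  by rewrite !opprD !opprK [LHS]addrC [LHS]addrA [RHS]addrAC.
have dcontract a' b' := contract_ce_diff b' z (alternating_antisym_head (f_con a')).
rewrite /contract in dcontract; rewrite !dcontract.
rewrite (op_opp (@ce_diff_plinear _) (h := fun y => f (cons0 b (cons0 a y)))
                (h1 := fun y => f (cons0 a (cons0 b y)))); last by move=> y; apply: f_anti.
rewrite /contract /=.
set La := lie_deriv a _ z; set Lb := lie_deriv b _ z; set dab := ce_diff _ z.
clearbody La Lb dab.
by rewrite !opprD !opprK !addrA [LHS](@GRing.add V).[ACl (3*2*1*4)].
Qed.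

Lemma ce_diff_alternating n (f : cochain g V n) : alternating f -> alternating (ce_diff f).
Proof.
elim: n f => [|n IH] f altf.
  by split=> //= c u v y; rewrite !cons0_ord0 !skip_ord0_cons0 act_linl.
have [f_lin f_con f_anti] := altf.
split; last exact: ce_diff_antisym_head.
- move=> c u v y; have dcons0 a := contract_ce_diff a y f_anti.
  rewrite /contract in dcons0; rewrite !dcons0 lie_deriv_linl //.
  rewrite (@ce_diff_plinear _ c _ (contract u f) (contract v f)); last first.
    by move=> y'; rewrite /contract f_lin.
  by rewrite opprD addrACA -scalerBr.
- move=> a; apply: (alternating_sub (h1 := lie_deriv a f) (h2 := ce_diff (contract a f))).
  + exact: lie_deriv_alternating.
  + exact/IH/f_con.
  + by move=> y; rewrite contract_ce_diff.
Qed.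

Lemma lie_deriv_commutator n (f : cochain g V n) a b y : alternating f ->
  lie_deriv a (lie_deriv b f) y - lie_deriv b (lie_deriv a f) y = lie_deriv (br a b) f y.
Proof.
elim: n f a b y => [|n IH] f a b y altf.
  by rewrite /lie_deriv /= !subr0 act_br.
have [f_lin f_con f_anti] := altf.
rewrite (cons0_head_skip y); set c := y ord0; set z := skip ord0 y.
have LLcons0 a' b' : lie_deriv a' (lie_deriv b' f) (cons0 c z) =
    lie_deriv a' (lie_deriv b' (contract c f)) z - lie_deriv a' (contract (br b' c) f) z
    - (lie_deriv b' (contract (br a' c) f) z - f (cons0 (br b' (br a' c)) z)).
  have := contract_lie_deriv a' c z (alternating_antisym_head (lie_deriv_alternating b' altf)).
  rewrite {1}/contract => ->.
  rewrite (op_sub (lie_deriv_plinear a') (h1 := lie_deriv b' (contract c f))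
                  (h2 := contract (br b' c) f)); last by move=> y'; rewrite contract_lie_deriv.
  by rewrite contract_lie_deriv.
have := contract_lie_deriv (br a b) c z f_anti; rewrite {1}/contract => ->.
have regroup (P Q M N F1 F2 : V) :
  P - M - (N - F1) - (Q - N - (M - F2)) = P - Q + (F1 - F2).
  by rewrite !opprD !opprK !addrA [LHS](@GRing.add V).[ACl (1*5*4*8*2*7*3*6)] !subrK ?addrA.
rewrite !LLcons0 regroup IH; last exact: f_con.
by rewrite -linear_headB // (br_jacobi_sub Hbr) linear_headN.
Qed.

Lemma lie_deriv_ce_diff n (f : cochain g V n) a y : alternating f ->
  lie_deriv a (ce_diff f) y = ce_diff (lie_deriv a f) y.
Proof.
elim: n f a y => [|n IH] f a y altf.
  rewrite /lie_deriv /= big_ord1 expr0 scale1r !cons0_ord0 !skip_ord0_cons0 !subr0 act_br.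
  by rewrite opprB addrC subrK.
have [_ f_con f_anti] := altf.
rewrite (cons0_head_skip y); set b := y ord0; set z := skip ord0 y.
have := contract_lie_deriv a b z (alternating_antisym_head (ce_diff_alternating altf)).
rewrite {1}/contract => ->.
rewrite (op_sub (lie_deriv_plinear a) (h1 := lie_deriv b f) (h2 := ce_diff (contract b f)));
  last by move=> y'; rewrite contract_ce_diff.
have := contract_ce_diff b z (alternating_antisym_head (lie_deriv_alternating a altf)).
rewrite {1}/contract => ->.
rewrite (op_sub (@ce_diff_plinear _) (h1 := lie_deriv a (contract b f))
                (h2 := contract (br a b) f)); last by move=> y'; rewrite contract_lie_deriv.
rewrite contract_ce_diff // IH; last exact: f_con.
rewrite -(lie_deriv_commutator a b _ altf).
have regroup (P Q M N : V) : P - M - (P - Q - N) = Q - (M - N).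
  by rewrite !opprD !opprK !addrA [LHS](@GRing.add V).[ACl (1*3*2*4*5)] subrr add0r [- M + Q]addrC.
exact: regroup.
Qed.

Lemma ce_diff_ce_diff n (f : cochain g V n) x : alternating f -> ce_diff (ce_diff f) x = 0.
Proof.
elim: n f x => [|n IH] f x altf; rewrite (cons0_head_skip x);
  set a := x ord0; set y := skip ord0 x;
  have := contract_ce_diff a y (alternating_antisym_head (ce_diff_alternating altf));
  rewrite {1}/contract => ->; rewrite lie_deriv_ce_diff //.
  rewrite (op_ext (@ce_diff_plinear _) (h1 := lie_deriv a f)) ?subrr //.
  by move=> y'; rewrite /contract /lie_deriv /= cons0_ord0 skip_ord0_cons0 subr0.
have [_ f_con f_anti] := altf.
rewrite (op_sub (@ce_diff_plinear _) (h := contract a (ce_diff f)) (h1 := lie_deriv a f)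
                (h2 := ce_diff (contract a f))); last by move=> y'; apply: contract_ce_diff.
by rewrite IH ?subr0 ?subrr //; apply: f_con.
Qed.

End Cartan.

Definition map_args (R : fieldType) (g : lmodType R) n (F : g -> g)
    (x : {ffun 'I_n -> g}) : {ffun 'I_n -> g} :=
  [ffun j => F (x j)].

Definition map_args_on (R : fieldType) (g : lmodType R) n (S : {set 'I_n}) (F : g -> g)
    (x : {ffun 'I_n -> g}) : {ffun 'I_n -> g} :=
  [ffun j => if j \in S then F (x j) else x j].

Section MultiAdditiveExpansion.
Variables (R : fieldType) (g V : lmodType R) (D : g -> g) (K : V -> V).
Variables (n : nat) (h : cochain g V n).
Hypothesis h_add : forall x i u v, h (upd x i (u + v)) = h (upd x i u) + h (upd x i v).

Lemma sum_map_args_on (A : {set 'I_n}) x :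
  \sum_(S : {set 'I_n} | S \subset A) h (map_args_on S D x) =
  h (map_args_on A (fun u => u + D u) x).
Proof.
elim: {A}_.+1 {-2}A (ltnSn #|A|) x => // k IHk A leA x.
have [-> | [i iA]] := set_0Vmem A.
  rewrite (big_pred1 set0); last by move=> S; rewrite subset0.
  by congr h; apply/ffunP => j; rewrite !ffunE in_set0.
have ltAi : (#|A :\ i| < k)%N by rewrite -ltnS (leq_trans _ leA) // (cardsD1 i A) iA.
rewrite (bigID (fun S : {set 'I_n} => i \in S)) /= addrC.
have -> : \sum_(S : {set 'I_n} | (S \subset A) && (i \notin S)) h (map_args_on S D x) =
          \sum_(S : {set 'I_n} | S \subset A :\ i) h (map_args_on S D x).
  by apply: eq_bigl => S; rewrite subsetD1.
have -> : \sum_(S : {set 'I_n} | (S \subset A) && (i \in S)) h (map_args_on S D x) =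
    \sum_(S : {set 'I_n} | S \subset A :\ i) h (map_args_on S D (upd x i (D (x i)))).
  rewrite (reindex_onto (fun S => i |: S) (fun S => S :\ i)) /=; last first.
    by move=> S /andP [_ iS]; rewrite setD1K.
  apply: eq_big => S.
    rewrite setU11 andbT subsetD1 subUset sub1set iA /=.
    case iS: (i \in S); rewrite ?andbF ?andbT.
      apply/negbTE; rewrite negb_and; apply/orP; right.
      by apply/eqP => /setP /(_ i); rewrite !inE eqxx iS.
    by rewrite setU1K ?iS // eqxx andbT.
  move=> /andP [_ /eqP eS].
  have niS : i \notin S by rewrite -eS !inE eqxx.
  congr h; apply/ffunP => j; rewrite !ffunE !inE.
  by case: (eqVneq j i) => [-> | nji] /=; rewrite ?(negbTE niS).
rewrite !IHk //.
have map_upd w : map_args_on (A :\ i) (fun u => u + D u) (upd x i w) =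
                 upd (map_args_on (A :\ i) (fun u => u + D u) x) i w.
  by apply/ffunP => j; rewrite !ffunE !inE; case: (eqVneq j i).
have upd_id : map_args_on (A :\ i) (fun u => u + D u) x =
              upd (map_args_on (A :\ i) (fun u => u + D u) x) i (x i).
  by apply/ffunP => j; rewrite !ffunE !inE; case: (eqVneq j i) => [-> |].
rewrite map_upd {1}upd_id -h_add; congr h.
by apply/ffunP => j; rewrite !ffunE !inE; case: (eqVneq j i) => [-> | nji] //=; rewrite iA.
Qed.

Lemma Top_multiadditive x :
  Top D K h x = (-1) ^+ n *: (h (map_args (fun u => u + D u) x) - (h x + K (h x))).
Proof.
have := sum_map_args_on setT x.
rewrite (eq_bigl (fun _ => true)); last by move=> S; rewrite subsetT.
rewrite (bigD1 set0) //=.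
have -> : map_args_on set0 D x = x by apply/ffunP => j; rewrite ffunE inE.
have -> : map_args_on setT (fun u => u + D u) x = map_args (fun u => u + D u) x.
  by apply/ffunP => j; rewrite !ffunE inE.
move=> <-; rewrite /Top; congr (_ *: _).
by rewrite opprD addrA [h x + _]addrC addrK.
Qed.

End MultiAdditiveExpansion.

Section Naturality.
Variables (R : fieldType) (g V : lmodType R) (br : g -> g -> g) (rho : g -> V -> V).

Lemma ce_formula_map_args (act : g -> V -> V) (phi : g -> g) m (h : cochain g V m.+1) x :
  (forall u v, br (phi u) (phi v) = phi (br u v)) ->
  (forall u v, act u v = rho (phi u) v) ->
  ce_formula br act (fun y => h (map_args phi y)) x = ce_formula br rho h (map_args phi x).
Proof.
move=> phi_br act_phi; rewrite /ce_formula; congr (_ + _); apply: eq_bigr => i _.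
  by rewrite act_phi ffunE; congr (_ *: rho _ (h _)); apply/ffunP => k; rewrite !ffunE.
apply: eq_bigr => j _; congr (_ *: h _); apply/ffunP => k; rewrite !ffunE.
by case: (unlift ord0 k) => [k'|]; rewrite ?phi_br // !ffunE.
Qed.

Lemma ce_formula_comp (act : g -> V -> V) (Psi : V -> V) m (h : cochain g V m.+1) x :
  (forall (c : R) u v, Psi (c *: u + v) = c *: Psi u + Psi v) ->
  (forall u v, Psi (rho u v) = act u (Psi v)) ->
  ce_formula br act (fun y => Psi (h y)) x = Psi (ce_formula br rho h x).
Proof.
move=> Psi_lin Psi_rho; rewrite /ce_formula (linfD Psi_lin) !(linf_sum Psi_lin).
congr (_ + _); apply: eq_bigr => i _; first by rewrite (linfZ Psi_lin) Psi_rho.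
by rewrite (linf_sum Psi_lin); apply: eq_bigr => j _; rewrite (linfZ Psi_lin).
Qed.

End Naturality.

Section DifferenceRepresentation.
Variables (R : fieldType) (g V : lmodType R) (br : g -> g -> g) (D : g -> g)
  (rho : g -> V -> V) (K : V -> V).
Hypothesis Hbr : is_lie_bracket br.
Hypothesis HD : is_difference_op br D.
Hypothesis Hrho : is_lie_rep br rho.
Hypothesis HK : is_diff_rep D rho K.

Definition idD (u : g) := u + D u.
Definition idK (v : V) := v + K v.
Definition rhoD (x : g) (v : V) := rho x v + rho (D x) v.

Lemma idD_br x y : br (idD x) (idD y) = idD (br x y).
Proof.
have [_ Dbr] := HD.
by rewrite /idD Dbr (brDl Hbr) !(brDr Hbr) [br (D x) y](br_anti Hbr) !addrA.
Qed.

Lemma rhoD_idD x v : rhoD x v = rho (idD x) v.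
Proof.
have [rho_lin _ _] := Hrho.
by rewrite /rhoD /idD (linfD (f := rho^~ v)) // => c u w; apply: rho_lin.
Qed.

Lemma rhoD_lie_rep : is_lie_rep br rhoD.
Proof.
have [rho_linl rho_linr rho_br] := Hrho; have [D_lin _] := HD; split.
- move=> c x y v; rewrite /rhoD D_lin !rho_linl scalerDr.
  by rewrite !addrA [LHS](@GRing.add V).[ACl (1*3*2*4)].
- move=> c x u v; rewrite /rhoD !rho_linr scalerDr.
  by rewrite !addrA [LHS](@GRing.add V).[ACl (1*3*2*4)].
- by move=> x y v; rewrite !rhoD_idD -idD_br rho_br.
Qed.

Lemma idK_lin (c : R) u v : idK (c *: u + v) = c *: idK u + idK v.
Proof.
have [K_lin _] := HK.
by rewrite /idK K_lin scalerDr !addrA [LHS](@GRing.add V).[ACl (1*3*2*4)].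
Qed.

Lemma idK_rho x v : idK (rho x v) = rhoD x (idK v).
Proof.
have [_ K_rho] := HK; have [_ rho_linr _] := Hrho.
rewrite /idK /rhoD K_rho (linfD (fun c => rho_linr c x)) (linfD (fun c => rho_linr c (D x))).
by rewrite !addrA [LHS](@GRing.add V).[ACl (1*3*2*4)].
Qed.

Lemma ce_diff_Top m (f : cochain g V m.+1) y : alternating f ->
  ce_diff br rhoD (Top D K f) y + Top D K (ce_diff br rho f) y = 0.
Proof.
move=> altf; have dpartial_lin := ce_diff_plinear rhoD_lie_rep (n := m.+1).
rewrite (op_scale dpartial_lin (c := (-1) ^+ m.+1)
                  (h1 := fun x => f (map_args idD x) - idK (f x))); last first.
  by move=> x; rewrite (Top_multiadditive _ _ (fun x i u v => alternating_updD x i u v altf)).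
rewrite (op_sub dpartial_lin (h1 := fun x => f (map_args idD x)) (h2 := fun x => idK (f x))) //=.
rewrite (ce_formula_map_args _ _ idD_br rhoD_idD) (ce_formula_comp br _ _ idK_lin idK_rho).
have altdf := ce_diff_alternating Hbr Hrho altf.
rewrite (Top_multiadditive _ _ (fun x i u v => alternating_updD x i u v altdf)).
by rewrite [_ ^+ m.+2]exprS mulN1r scaleNr addrN.
Qed.

End DifferenceRepresentation.

Unset Implicit Arguments.

Theorem theorem4p10 (R : fieldType) (g V : lmodType R)
  (br : g -> g -> g) (D : g -> g) (rho : g -> V -> V) (K : V -> V) :
  is_lie_bracket br -> is_difference_op br D ->
  is_lie_rep br rho -> is_diff_rep D rho K ->
  (forall f : cochain g V 1, hom_wedge f ->
     let p := delta br rho D K (delta1 br rho D K f) in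
     (forall x, p.1 x = 0) /\ (forall y, p.2 y = 0)) /\
  (forall (m : nat) (f : cochain g V m.+2) (th : cochain g V m.+1),
     hom_wedge f -> hom_wedge th ->
     let p := delta br rho D K (delta br rho D K (f, th)) in
     (forall x, p.1 x = 0) /\ (forall y, p.2 y = 0)).
Proof.
move=> Hbr HD Hrho HK; have HrhoD := rhoD_lie_rep Hbr HD Hrho.
split=> [f /hom_wedge_alternating altf | m f th /hom_wedge_alternating altf
                                             /hom_wedge_alternating altth] p.
- split=> x.
  + exact: (@ce_diff_ce_diff _ _ _ _ _ Hbr Hrho 1 f x altf).
  + exact: (ce_diff_Top Hbr HD Hrho HK x altf).
- split=> x.
  + exact: (@ce_diff_ce_diff _ _ _ _ _ Hbr Hrho m.+2 f x altf).
  + change (ce_diff br (rhoD D rho) (addc (ce_diff br (rhoD D rho) th) (Top D K f)) x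
            + Top D K (ce_diff br rho f) x = 0).
    rewrite (op_add (ce_diff_plinear HrhoD (n := m.+2)) (h1 := ce_diff br (rhoD D rho) th)
                    (h2 := Top D K f)) //.
    by rewrite (ce_diff_ce_diff Hbr HrhoD x altth) add0r (ce_diff_Top Hbr HD Hrho HK x altf).
Qed.
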